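(* In every symmetric instance with $k$ signals ($2\le k\le n$), for every direct and persuasive scheme $\varphi$ that recommends only actions in $[k]$, there exist $s\in[-\infty,0]$ and an $s$-Pareto point collection $\mathcal P$ with $u_{\mathcal S}(\mathcal P)\ge u_{\mathcal S}(\varphi)$.
   Context: Model: a receiver chooses one of the actions $[n]$; each action $i$ has a type $\theta_i$; the state $\boldsymbol\theta=(\theta_1,\dots,\theta_n)$ is drawn from a commonly known distribution $q$ over a finite set of type vectors. Each type $t$ has receiver value $\rho(t)$ and sender value $\xi(t)$. A signaling scheme with $k$ signals maps each state to a distribution over $k$ signals; the receiver picks an action maximizing her conditional expected utility given the signal, ties broken in favor of the sender; $u_{\mathcal S},u_{\mathcal R}$ denote expected utilities. Direct: each signal recommends an action; persuasive: for each signal sent with positive probability recommending $i$, $\mathbb E[\rho(\theta_i)\mid\sigma]\ge\mathbb E[\rho(\theta_j)\mid\sigma]$ for all $j$. $\rho_E=\max_{i}\sum_{\boldsymbol\theta}q_{\boldsymbol\theta}\rho(\theta_i)$. Symmetric instance: $q_{\boldsymbol\theta}=q_{\boldsymbol\theta'}$ whenever $\boldsymbol\theta'$ is a permutation of $\boldsymbol\theta$; types in a state are pairwise distinct. Identify each type $c$ with the point $(\rho(c),\xi(c))$. For a $k$-set $C$ of types, $q_C=\Pr[\{\theta_1,\dots,\theta_k\}=C]$. For $s\in(-\infty,0]$, a point $p\in\mathrm{conv}(C)$ corresponds to slope $s$ if it maximizes $y-sx$ over $(x,y)\in\mathrm{conv}(C)$; it corresponds to slope $-\infty$ if it maximizes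 the first coordinate over $\mathrm{conv}(C)$. A point collection $\mathcal P$ assigns to each $C$ with $q_C>0$ a point $p(C)=(p_{\mathcal R}(C),p_{\mathcal S}(C))\in\mathrm{conv}(C)$; $u_{\mathcal S}(\mathcal P)=\sum_Cq_Cp_{\mathcal S}(C)$, $u_{\mathcal R}(\mathcal P)=\sum_Cq_Cp_{\mathcal R}(C)$. $\mathcal P$ is $s$-Pareto if every $p(C)$ corresponds to slope $s$ and $u_{\mathcal R}(\mathcal P)\ge\rho_E$. *)

From HB Require Import structures.
From mathcomp Require Import all_boot all_order all_algebra all_fingroup.
From mathcomp Require Import reals.
Set Implicit Arguments. Unset Strict Implicit. Unset Printing Implicit Defensive.
Import Order.TTheory GRing.Theory Num.Theory.
Local Open Scope ring_scope.

(* A state: the vector of types (theta_1, ..., theta_n) of the n actions. *)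
Definition state (n : nat) (T : finType) := {ffun 'I_n -> T}.

(* Maximum of a nonempty finite list of reals (0 on the empty list, never used
   since n >= 2). *)
Definition seqmax {R : realDomainType} (s : seq R) : R :=
  match s with [::] => 0 | x :: s' => foldr Num.max x s' end.

Section Model.
Variables (R : realType) (T : finType) (n k : nat).
Variables (rho xi : T -> R) (q : state n T -> R).

Definition is_prior : Prop := (forall th, 0 <= q th) /\ \sum_th q th = 1.

Definition symmetric_instance : Prop :=
  (forall (th : state n T) (pi : 'S_n), q [ffun i => th (pi i)] = q th) /\
  (forall th : state n T, 0 < q th -> injective th).

(* signaling scheme with k signals: phi th sg = Pr[signal sg | state th] *)
Definition is_scheme (phi : state n T -> 'I_k -> R) : Prop :=
  (forall th sg, 0 <= phi th sg) /\ (forall th, \sum_sg phi th sg = 1).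

Definition sig_prob (phi : state n T -> 'I_k -> R) (sg : 'I_k) : R :=
  \sum_th q th * phi th sg.

(* conditional expectation of f given signal sg (0 if Pr[sg] = 0) *)
Definition cond_exp (phi : state n T -> 'I_k -> R) (sg : 'I_k)
  (f : state n T -> R) : R :=
  (\sum_th q th * phi th sg * f th) / sig_prob phi sg.

Definition persuasive (phi : state n T -> 'I_k -> R) (rec : 'I_k -> 'I_n) : Prop :=
  forall sg, 0 < sig_prob phi sg ->
    forall j : 'I_n, cond_exp phi sg (fun th => rho (th j))
                     <= cond_exp phi sg (fun th => rho (th (rec sg))).

Definition receiver_opt (phi : state n T -> 'I_k -> R) (sg : 'I_k) (i : 'I_n) : bool :=
  [forall j : 'I_n, cond_exp phi sg (fun th => rho (th j))
                    <= cond_exp phi sg (fun th => rho (th i))].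

(* sender's conditional utility given sg, receiver breaking ties for sender *)
Definition sender_sig_value (phi : state n T -> 'I_k -> R) (sg : 'I_k) : R :=
  seqmax (map (fun i : 'I_n => cond_exp phi sg (fun th => xi (th i)))
              (filter (receiver_opt phi sg) (enum 'I_n))).

Definition uS_scheme (phi : state n T -> 'I_k -> R) : R :=
  \sum_sg sig_prob phi sg * sender_sig_value phi sg.

Definition firstk (th : state n T) : {set T} := th @: [set i : 'I_n | (i < k)%N].

Definition qC (C : {set T}) : R := \sum_th q th * (firstk th == C)%:R.

(* p in conv(C), identifying type c with the point (rho c, xi c) *)
Definition inconv (C : {set T}) (p : R * R) : Prop :=
  exists w : T -> R, [/\ forall c, 0 <= w c, forall c, c \notin C -> w c = 0,
    \sum_c w c = 1 & p = (\sum_c w c * rho c, \sum_c w c * xi c)].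

(* slopes in [-oo, 0]: None stands for -oo, Some s for a real s (<= 0) *)
Definition corresponds (C : {set T}) (p : R * R) (s : option R) : Prop :=
  inconv C p /\
  match s with
  | Some s0 => forall p', inconv C p' -> p'.2 - s0 * p'.1 <= p.2 - s0 * p.1
  | None => forall p', inconv C p' -> p'.1 <= p.1
  end.

(* a point collection is P : {set T} -> R * R, relevant on the k-sets C with
   q_C > 0 *)
Definition is_point_collection (P : {set T} -> R * R) : Prop :=
  forall C : {set T}, #|C| = k -> 0 < qC C -> inconv C (P C).

Definition uS_pc (P : {set T} -> R * R) : R :=
  \sum_(C : {set T} | #|C| == k) qC C * (P C).2.

Definition uR_pc (P : {set T} -> R * R) : R :=
  \sum_(C : {set T} | #|C| == k) qC C * (P C).1.

Definition rhoE : R :=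
  seqmax (map (fun i : 'I_n => \sum_th q th * rho (th i)) (enum 'I_n)).

Definition s_pareto (s : option R) (P : {set T} -> R * R) : Prop :=
  is_point_collection P /\
  (forall C : {set T}, #|C| = k -> 0 < qC C -> corresponds C (P C) s) /\
  rhoE <= uR_pc P.

End Model.

From HB Require Import structures.
From mathcomp Require Import all_boot all_order all_algebra all_fingroup.
From mathcomp Require Import reals ring lra.
Import Order.TTheory GRing.Theory Num.Theory.
Local Open Scope ring_scope.

(* For each signal fix the action the receiver takes
      (optimal for her, best for the sender among her optima).  These are at
      most k actions, so a permutation pi moves them into [k].  Since q is
      permutation invariant, relabelling the states by pi shows that the
      expected type of the action taken, conditioned on the event that the
      first k types form C, is a point cpoint C of conv(C); the weighted sum
      of these points has sender utility u_S(phi) and receiver utility at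
      least rho_E.
   2. Pareto improvement.  For a slope -l <= 0, mix with a common weight t
      the maximizers of xi + l rho of highest and lowest receiver value.
      Taking l the least breakpoint at which the high mixture still gives
      the receiver her old utility and tuning t, one gets a collection that
      corresponds to slope -l, keeps the receiver's utility and, comparing
      along the supporting line of slope -l, does not lower the sender's. *)

Set Implicit Arguments. Unset Strict Implicit.

Lemma sum_delta (R : pzSemiRingType) (T : finType) (h : T) (f : T -> R) :
  \sum_c (c == h)%:R * f c = f h.
Proof.
rewrite (bigD1 h) //= eqxx mul1r big1 ?addr0 // => c /negbTE ->.
by rewrite mul0r.
Qed.

Section ConvexHull.
Variables (R : realType) (T : finType) (rho xi : T -> R).

Lemma inconv_le (C : {set T}) (p : R * R) (a b M : R) :
  inconv rho xi C p -> (forall c, c \in C -> a * rho c + b * xi c <= M) ->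
  a * p.1 + b * p.2 <= M.
Proof.
case=> w [w_ge0 w_out w_sum1 ->] /= hC.
have -> : a * (\sum_c w c * rho c) + b * (\sum_c w c * xi c)
          = \sum_c w c * (a * rho c + b * xi c).
  by rewrite !mulr_sumr -big_split; apply: eq_bigr => c _ /=; ring.
rewrite -[M]mul1r -w_sum1 mulr_suml; apply: ler_sum => c _.
have [cC | cNC] := boolP (c \in C); first by rewrite ler_wpM2l ?hC.
by rewrite w_out // !mul0r.
Qed.

Lemma inconv_mix2 (C : {set T}) (c d : T) (t : R) :
  c \in C -> d \in C -> 0 <= t <= 1 ->
  inconv rho xi C (t * rho c + (1 - t) * rho d, t * xi c + (1 - t) * xi d).
Proof.
move=> cC dC /andP [t_ge0 t_le1].
exists (fun x => t * (x == c)%:R + (1 - t) * (x == d)%:R); split.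
- by move=> x; rewrite addr_ge0 // mulr_ge0 ?ler0n ?subr_ge0.
- move=> x xNC; have /negbTE -> : x != c by apply: contraNneq xNC => ->.
  have /negbTE -> : x != d by apply: contraNneq xNC => ->.
  by rewrite !mulr0 addr0.
- rewrite big_split /= -!mulr_sumr.
  have one (h : T) : \sum_x (x == h)%:R = 1 :> R.
    by rewrite -[RHS](sum_delta h (fun=> 1)); apply: eq_bigr => x _; rewrite mulr1.
  by rewrite !one; ring.
- have mix (f : T -> R) : t * f c + (1 - t) * f d
      = \sum_x (t * (x == c)%:R + (1 - t) * (x == d)%:R) * f x.
    rewrite (eq_bigr (fun x => t * ((x == c)%:R * f x) + (1 - t) * ((x == d)%:R * f x))).
      by rewrite big_split /= -!mulr_sumr !sum_delta.
    by move=> x _; ring.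
  by rewrite !mix.
Qed.

End ConvexHull.

Section SupportingLine.
Variables (R : realType) (T : finType) (rho xi : T -> R) (c0 : T).

(* The value of type c along slope -l: maximizing it over conv(C) is
   finding the point of conv(C) that corresponds to slope -l. *)
Definition score (l : R) (c : T) : R := xi c + l * rho c.

(* An element of C (c0 if C is empty), the seed of the arg-max searches. *)
Definition some_in (C : {set T}) : T := odflt c0 [pick c in C].

Lemma some_inP (C : {set T}) : C != set0 -> some_in C \in C.
Proof.
by case/set0Pn=> x xC; rewrite /some_in; case: pickP => //= /(_ x); rewrite xC.
Qed.

Definition best (l : R) (C : {set T}) : T :=
  Order.arg_max (some_in C) (mem C) (score l).

Lemma best_spec (l : R) (C : {set T}) : C != set0 ->
  best l C \in C /\ forall c, c \in C -> score l c <= score l (best l C).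
Proof.
move/some_inP=> C0; rewrite /best; case: (arg_maxP (score l) (P := mem C) C0) => b bC b_max.
by split=> // c /b_max.
Qed.

Definition optimal (l : R) (C : {set T}) : pred T :=
  [pred c in C | score l (best l C) <= score l c].

Lemma optimal_best (l : R) (C : {set T}) : C != set0 -> optimal l C (best l C).
Proof. by case/(best_spec l)=> bC _; apply/andP. Qed.

Lemma optimalP (l : R) (C : {set T}) (c : T) : C != set0 -> optimal l C c ->
  c \in C /\ score l c = score l (best l C).
Proof.
move=> C0 /andP [cC le_bc]; split => //; apply/le_anti; rewrite le_bc andbT.
by case: (best_spec l C0) => _; apply.
Qed.

(* The optimal types of highest and of lowest receiver value; any mixture
   of the two corresponds to slope -l. *)
Definition best_hi (l : R) (C : {set T}) : T :=
  Order.arg_max (best l C) (optimal l C) rho.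
Definition best_lo (l : R) (C : {set T}) : T :=
  Order.arg_min (best l C) (optimal l C) rho.

Lemma best_hi_spec (l : R) (C : {set T}) : C != set0 ->
  optimal l C (best_hi l C) /\ forall c, optimal l C c -> rho c <= rho (best_hi l C).
Proof.
move/(optimal_best l)=> b0; rewrite /best_hi.
by case: (arg_maxP rho b0) => h h_opt h_max; split=> // c /h_max.
Qed.

Lemma best_lo_spec (l : R) (C : {set T}) : C != set0 ->
  optimal l C (best_lo l C) /\ forall c, optimal l C c -> rho (best_lo l C) <= rho c.
Proof.
move/(optimal_best l)=> b0; rewrite /best_lo.
by case: (arg_minP rho b0) => h h_opt h_min; split=> // c /h_min.
Qed.

(* The nonnegative slopes at which two types (c, d) with rho d < rho c tie;
   None stands for the slope 0. The optimal sets only change at these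
   finitely many breakpoints. *)
Definition tie_slope (o : option (T * T)) : R :=
  if o is Some (c, d) then
    if rho d < rho c then Num.max 0 ((xi d - xi c) / (rho c - rho d)) else 0
  else 0.

Lemma tie_slope_ge0 (o : option (T * T)) : 0 <= tie_slope o.
Proof. by case: o => [[c d]|] //=; case: ifP => // _; rewrite le_max lexx. Qed.

Lemma best_hi_top (l : R) (C : {set T}) (c : T) :
  (forall o, tie_slope o <= l) -> C != set0 -> c \in C -> rho c <= rho (best_hi l C).
Proof.
move=> l_top C0 cC; case: (best_hi_spec l C0) => h_opt h_max.
rewrite leNgt; apply/negP => lt_hc.
have gap : 0 < rho c - rho (best_hi l C) by rewrite subr_gt0.
have := l_top (Some (c, best_hi l C)); rewrite /= lt_hc ge_max => /andP [_].
rewrite ler_pdivrMr // => le_xi.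
suff /h_max : optimal l C c by rewrite leNgt lt_hc.
apply/andP; split=> //; case: (optimalP C0 h_opt) => _ <-; rewrite /score; nra.
Qed.

Lemma best_lo_optimal_below (l l' : R) (C : {set T}) :
  0 <= l' -> l' < l -> (forall o, tie_slope o < l -> tie_slope o <= l') ->
  C != set0 -> optimal l' C (best_lo l C).
Proof.
move=> l'_ge0 lt_l'l no_break C0.
case: (best_lo_spec l C0) => d_opt d_min; case: (optimalP C0 d_opt) => dC d_score.
set d := best_lo l C in d_opt d_min dC d_score *.
suff d_max : forall c, c \in C -> score l' c <= score l' d.
  by apply/andP; split=> //; apply: d_max; case: (best_spec l' C0).
move=> c cC.
have le_cd : score l c <= score l d by rewrite d_score; case: (best_spec l C0) => _; apply.
have [le_dc | lt_cd] := lerP (rho d) (rho c); first by move: le_cd; rewrite /score; nra.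
have gap : 0 < rho d - rho c by rewrite subr_gt0.
have tie_le : tie_slope (Some (d, c)) <= l.
  rewrite /= lt_cd ge_max (le_trans l'_ge0 (ltW lt_l'l)) /= ler_pdivrMr //.
  by move: le_cd; rewrite /score; nra.
have [tie_lt | tie_ge] := ltrP (tie_slope (Some (d, c))) l.
  have := no_break _ tie_lt; rewrite /= lt_cd ge_max => /andP [_].
  by rewrite ler_pdivrMr // /score => ?; nra.
have tie_eq : (xi c - xi d) / (rho d - rho c) = l.
  have : tie_slope (Some (d, c)) = l by apply/le_anti; rewrite tie_le tie_ge.
  by rewrite /= lt_cd /Num.max; case: ifP => _ //; lra.
suff /d_min : optimal l C c by rewrite leNgt lt_cd.
apply/andP; split=> //; rewrite -d_score /score.
move: tie_eq => /(congr1 (fun z => z * (rho d - rho c))).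
by rewrite divfK ?lt0r_neq0 // => ?; nra.
Qed.

Definition mixpt (t l : R) (C : {set T}) : R * R :=
  (t * rho (best_hi l C) + (1 - t) * rho (best_lo l C),
   t * xi (best_hi l C) + (1 - t) * xi (best_lo l C)).

Lemma mixpt_score (t l : R) (C : {set T}) : C != set0 ->
  (mixpt t l C).2 + l * (mixpt t l C).1 = score l (best l C).
Proof.
move=> C0; case: (optimalP C0 (proj1 (best_hi_spec l C0))) => _ e_hi.
case: (optimalP C0 (proj1 (best_lo_spec l C0))) => _ e_lo.
transitivity (t * score l (best_hi l C) + (1 - t) * score l (best_lo l C)).
  by rewrite /score /=; ring.
by rewrite e_hi e_lo; ring.
Qed.

Lemma mixpt_corresponds (t l : R) (C : {set T}) : 0 <= t <= 1 -> C != set0 ->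
  corresponds rho xi C (mixpt t l C) (Some (- l)).
Proof.
move=> t01 C0; split.
  case: (optimalP C0 (proj1 (best_hi_spec l C0))) => hiC _.
  by case: (optimalP C0 (proj1 (best_lo_spec l C0))) => loC _; apply: inconv_mix2.
move=> p p_in; rewrite !mulNr !opprK [_ + l * _]addrC mixpt_score //.
rewrite -[p.2]mul1r; apply: (inconv_le p_in) => c cC; rewrite mul1r addrC.
by case: (best_spec l C0) => _; apply.
Qed.

End SupportingLine.

Lemma interpolate (R : realFieldType) (lo hi r : R) : lo <= r <= hi ->
  exists2 t, 0 <= t <= 1 & t * hi + (1 - t) * lo = r.
Proof.
case/andP=> lo_r r_hi; have [eq_lohi | lt_lohi] := eqVneq lo hi.
  by exists 1; rewrite ?lexx ?ler01 //; apply/le_anti; rewrite -eq_lohi in r_hi *; lra.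
have gap : 0 < hi - lo by rewrite subr_gt0 lt_neqAle lt_lohi (le_trans lo_r).
exists ((r - lo) / (hi - lo)).
  apply/andP; split; first by apply: divr_ge0; lra.
  by rewrite ler_pdivrMr // mul1r lerD2r.
have -> : (r - lo) / (hi - lo) * hi + (1 - (r - lo) / (hi - lo)) * lo
          = lo + (r - lo) / (hi - lo) * (hi - lo) by ring.
by rewrite divfK ?gt_eqF // addrC subrK.
Qed.

Section ParetoImprovement.
Variables (R : realType) (T : finType) (rho xi : T -> R) (c0 : T) (k : nat).
Variable w : {set T} -> R.
Hypothesis w_ge0 : forall C, 0 <= w C.
Hypothesis k_gt0 : (0 < k)%N.

Definition wsum (F : {set T} -> R) : R := \sum_(C : {set T} | #|C| == k) w C * F C.

Lemma wsumDZ (F G : {set T} -> R) (l : R) :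
  wsum F + l * wsum G = wsum (fun C => F C + l * G C).
Proof. by rewrite /wsum mulr_sumr -big_split; apply: eq_bigr => C _ /=; ring. Qed.

Lemma kset_neq0 (C : {set T}) : #|C| == k -> C != set0.
Proof. by move/eqP=> cardC; rewrite -card_gt0 cardC. Qed.

Definition hi (l : R) : R := wsum (fun C => rho (best_hi rho xi c0 l C)).
Definition lo (l : R) : R := wsum (fun C => rho (best_lo rho xi c0 l C)).

Variable Q : {set T} -> R * R.
Hypothesis Q_in : forall C : {set T}, #|C| = k -> 0 < w C -> inconv rho xi C (Q C).

Lemma wsum_leQ (F G : {set T} -> R) :
  (forall C : {set T}, #|C| = k -> inconv rho xi C (Q C) -> F C <= G C) -> wsum F <= wsum G.
Proof.
move=> FG; apply: ler_sum => C /eqP cardC.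
have [w0 | w_neq0] := eqVneq (w C) 0; first by rewrite w0 !mul0r.
rewrite ler_wpM2l // FG //; apply: Q_in => //.
by rewrite lt_neqAle eq_sym w_neq0 w_ge0.
Qed.

Lemma wsum_mixpt1 (t l : R) :
  wsum (fun C => (mixpt rho xi c0 t l C).1) = t * hi l + (1 - t) * lo l.
Proof. by rewrite /hi /lo /wsum !mulr_sumr -big_split; apply: eq_bigr => C _ /=; ring. Qed.

Lemma mixpt_dominates (t l : R) :
  wsum (fun C => (Q C).2) + l * wsum (fun C => (Q C).1)
  <= wsum (fun C => (mixpt rho xi c0 t l C).2) + l * wsum (fun C => (mixpt rho xi c0 t l C).1).
Proof.
rewrite !wsumDZ; apply: wsum_leQ => C cardC QC.
have C0 : C != set0 by apply: kset_neq0; rewrite cardC.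
rewrite mixpt_score // -[(Q C).2]mul1r addrC.
apply: (inconv_le QC) => c cC; rewrite mul1r addrC.
by case: (best_spec rho xi c0 l C0) => _; apply.
Qed.

Lemma hi_above_breakpoints (l : R) : (forall o, tie_slope rho xi o <= l) ->
  wsum (fun C => (Q C).1) <= hi l.
Proof.
move=> l_top; apply: wsum_leQ => C cardC QC.
have C0 : C != set0 by apply: kset_neq0; rewrite cardC.
have := inconv_le (a := 1) (b := 0) (M := rho (best_hi rho xi c0 l C)) QC.
rewrite mul1r mul0r addr0; apply=> c cC; rewrite mul1r mul0r addr0.
exact: best_hi_top.
Qed.

Lemma lo_le_hi_below (l l' : R) : 0 <= l' -> l' < l ->
  (forall o, tie_slope rho xi o < l -> tie_slope rho xi o <= l') -> lo l <= hi l'.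
Proof.
move=> l'_ge0 lt_l'l no_break; apply: ler_sum => C /kset_neq0 C0; rewrite ler_wpM2l //.
by case: (best_hi_spec rho xi c0 l' C0) => _; apply; apply: best_lo_optimal_below.
Qed.

(* The slope: the least breakpoint l at which hi l still reaches the
   receiver utility of Q. Then either l = 0 or lo l does not exceed it, so
   that a mixture of best_hi l and best_lo l matches it exactly. *)
Lemma slope_choice : exists l, [/\ 0 <= l, wsum (fun C => (Q C).1) <= hi l &
  l = 0 \/ lo l <= wsum (fun C => (Q C).1)].
Proof.
set r := wsum _.
have [L _ L_top] := arg_maxP (tie_slope rho xi) (P := xpredT) (i0 := None) isT.
have r_hi_L : r <= hi (tie_slope rho xi L) by apply: hi_above_breakpoints => o; apply: L_top.
have [o r_hi_o o_min] :=
  arg_minP (tie_slope rho xi) (P := fun o => r <= hi (tie_slope rho xi o)) r_hi_L.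
set l := tie_slope rho xi o in r_hi_o o_min *.
have l_ge0 : 0 <= l by apply: tie_slope_ge0.
exists l; split => //; have [lo_r | r_lo] := lerP (lo l) r; [by right | left].
apply/eqP; rewrite eq_le l_ge0 andbT leNgt; apply/negP => l_gt0.
have [o' o'_lt o'_max] :=
  arg_maxP (tie_slope rho xi) (P := fun o => tie_slope rho xi o < l) (i0 := None) l_gt0.
have hi_r : hi (tie_slope rho xi o') < r.
  by rewrite ltNge; apply/negP => /o_min; rewrite leNgt o'_lt.
have := lo_le_hi_below (tie_slope_ge0 rho xi o') o'_lt o'_max; lra.
Qed.

Lemma pareto_improvement : exists l (P : {set T} -> R * R), [/\ 0 <= l,
  forall C : {set T}, #|C| = k -> corresponds rho xi C (P C) (Some (- l)),
  wsum (fun C => (Q C).1) <= wsum (fun C => (P C).1) &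
  wsum (fun C => (Q C).2) <= wsum (fun C => (P C).2)].
Proof.
have [l [l_ge0 r_hi l_case]] := slope_choice; set r := wsum _ in r_hi l_case.
have P_corr t : 0 <= t <= 1 ->
    forall C : {set T}, #|C| = k -> corresponds rho xi C (mixpt rho xi c0 t l C) (Some (- l)).
  by move=> t01 C cardC; apply: mixpt_corresponds => //; apply: kset_neq0; rewrite cardC.
(* If lo l <= r, a mixture matches the receiver utility r exactly;
   otherwise l = 0 and best_hi alone does. *)
have [lo_r | r_lo] := lerP (lo l) r.
  have [t t01 t_r] : exists2 t, 0 <= t <= 1 & t * hi l + (1 - t) * lo l = r.
    by apply: interpolate; rewrite lo_r r_hi.
  exists l, (mixpt rho xi c0 t l); split; rewrite ?wsum_mixpt1 ?t_r //; first exact: P_corr.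
  by have := mixpt_dominates t l; rewrite wsum_mixpt1 t_r lerD2r.
have l0 : l = 0 by case: l_case => // lo_r; move: r_lo; rewrite ltNge lo_r.
have t01 : 0 <= (1 : R) <= 1 by rewrite ler01 lexx.
exists l, (mixpt rho xi c0 1 l); split; rewrite ?wsum_mixpt1 //; first exact: P_corr.
  by rewrite mul1r subrr mul0r addr0.
by have := mixpt_dominates 1 l; rewrite l0 !mul0r !addr0.
Qed.

End ParetoImprovement.

Lemma perm_into_prefix (n k : nat) (A : {set 'I_n}) : (#|A| <= k)%N ->
  exists pi : 'S_n, forall a, a \in A -> (pi a < k)%N.
Proof.
move=> cardA; pose L := enum A ++ enum (~: A).
have L_all i : i \in L by rewrite mem_cat !mem_enum inE; case: (i \in A).
have size_L : size L = n by rewrite size_cat -!cardE cardsC card_ord.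
have index_lt i : (index i L < n)%N by rewrite -[X in (_ < X)%N]size_L index_mem.
have pos_inj : injective (fun i => Ordinal (index_lt i)).
  by move=> i j /(congr1 val) /= eq_ij; rewrite -(nth_index i (L_all i)) eq_ij nth_index.
exists (perm pos_inj) => a aA; rewrite permE /= /L index_cat mem_enum aA.
by apply: leq_trans cardA; rewrite cardE index_mem mem_enum.
Qed.

Lemma seqmax_in (R : realDomainType) (s : seq R) : s != [::] -> seqmax s \in s.
Proof.
case: s => // x s _; rewrite /seqmax; elim: s => [|y s IH] /=; first by rewrite mem_seq1.
rewrite /Num.max /Order.max; case: ifP => _; rewrite !inE; last by rewrite eqxx orbT.
by move: IH; rewrite inE => /orP [->|->]; rewrite ?orbT.
Qed.

Lemma card_firstk (T : finType) (n k : nat) (th : state n T) :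
  (k <= n)%N -> injective th -> #|firstk k th| = k.
Proof.
move=> k_le_n th_inj; rewrite /firstk card_in_imset; last by move=> i j _ _; apply: th_inj.
have -> : [set i : 'I_n | (i < k)%N] = [set widen_ord k_le_n j | j in 'I_k].
  apply/setP => i; rewrite inE; apply/idP/imsetP => [lt_ik | [j _ ->]] //=.
  by exists (Ordinal lt_ik) => //; apply: val_inj.
by rewrite card_imset ?card_ord // => x y /(congr1 val) /= eq_xy; apply: val_inj.
Qed.

Section Symmetrization.
Variables (R : realType) (T : finType) (n k : nat) (rho xi : T -> R).
Variable q : state n T -> R.
Hypothesis q_ge0 : forall th, 0 <= q th.
Hypothesis q_sym : forall (th : state n T) (pi : 'S_n), q [ffun i => th (pi i)] = q th.
Hypothesis q_inj : forall th : state n T, 0 < q th -> injective th.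
Hypothesis k_le_n : (k <= n)%N.
Hypothesis n_gt0 : (0 < n)%N.
Variable phi : state n T -> 'I_k -> R.
Hypothesis phi_ge0 : forall th sg, 0 <= phi th sg.
Hypothesis phi_sum1 : forall th, \sum_sg phi th sg = 1.

Lemma cond_expK (sg : 'I_k) (f : state n T -> R) :
  sig_prob q phi sg * cond_exp q phi sg f = \sum_th q th * phi th sg * f th.
Proof.
rewrite /cond_exp; have [p0 | p_neq0] := eqVneq (sig_prob q phi sg) 0; last first.
  by rewrite mulrC divfK.
have qphi_ge0 th : true -> 0 <= q th * phi th sg by move=> _; apply: mulr_ge0.
rewrite p0 mul0r; symmetry; apply: big1 => th _.
by rewrite (psumr_eq0P qphi_ge0 p0) // mul0r.
Qed.

Lemma response_exists (sg : 'I_k) : exists a : 'I_n, receiver_opt rho q phi sg a &&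
  (cond_exp q phi sg (fun th => xi (th a)) == sender_sig_value rho xi q phi sg).
Proof.
have [i _ i_max] := arg_maxP (fun j => cond_exp q phi sg (fun th => rho (th j)))
  (P := xpredT) (i0 := Ordinal n_gt0) isT.
set L := filter (receiver_opt rho q phi sg) (enum 'I_n).
have iL : i \in L by rewrite mem_filter mem_enum andbT; apply/forallP => j; apply: i_max.
have : map (fun i : 'I_n => cond_exp q phi sg (fun th => xi (th i))) L != [::].
  by apply/eqP => /(congr1 size); rewrite size_map; case: L iL.
move=> /seqmax_in /mapP [a aL e]; exists a.
by move: aL; rewrite mem_filter => /andP [-> _]; rewrite /sender_sig_value -/L e /=.
Qed.

Definition response (sg : 'I_k) : 'I_n := xchoose (response_exists sg).

Definition chosen_value (f : T -> R) : R :=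
  \sum_sg \sum_th q th * phi th sg * f (th (response sg)).

Lemma uS_chosen_value : uS_scheme rho xi q phi = chosen_value xi.
Proof.
rewrite /uS_scheme /chosen_value; apply: eq_bigr => sg _.
by have /andP [_ /eqP <-] := xchooseP (response_exists sg); rewrite cond_expK.
Qed.

(* The receiver gets at least rho_E, since she best-responds to each signal. *)
Lemma rhoE_le_chosen_value : rhoE rho q <= chosen_value rho.
Proof.
have : map (fun i : 'I_n => \sum_th q th * rho (th i)) (enum 'I_n) != [::].
  by rewrite -size_eq0 size_map -cardE card_ord -lt0n.
rewrite /rhoE => /seqmax_in /mapP [j _ ->].
have -> : \sum_th q th * rho (th j) = \sum_sg \sum_th q th * phi th sg * rho (th j).
  rewrite exchange_big /=; apply: eq_bigr => th _.
  by rewrite -mulr_suml -mulr_sumr phi_sum1 mulr1.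
apply: ler_sum => sg _; rewrite -!cond_expK ler_wpM2l //.
  by apply: sumr_ge0 => th _; apply: mulr_ge0.
by have /andP [/forallP opt _] := xchooseP (response_exists sg); apply: opt.
Qed.

Variable pi : 'S_n.
Hypothesis pi_into_k : forall sg, (pi (response sg) < k)%N.

Definition relabel (th : state n T) : state n T := [ffun i => th (pi i)].

Lemma relabel_inj : injective relabel.
Proof.
move=> x y /ffunP eq_xy; apply/ffunP => i.
by have := eq_xy (pi^-1 i)%g; rewrite !ffunE permKV.
Qed.

(* By symmetry of q, relabelling the states does not change chosen_value;
   afterwards the action taken is always among the first k. *)
Lemma chosen_value_relabel (f : T -> R) : chosen_value f =
  \sum_th \sum_sg q th * phi (relabel th) sg * f (th (pi (response sg))).
Proof.
rewrite exchange_big; apply: eq_bigr => sg _ /=.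
rewrite (reindex_inj relabel_inj); apply: eq_bigr => th _.
by rewrite /relabel q_sym ffunE.
Qed.

Definition mass (C : {set T}) (f : T -> R) : R :=
  \sum_th \sum_sg (firstk k th == C)%:R * q th * phi (relabel th) sg
                  * f (th (pi (response sg))).

(* Conditional law of the type taken given {first k types = C}, and its
   barycenter: the point collection of the scheme. *)
Definition cweight (C : {set T}) (c : T) : R := mass C (fun x => (x == c)%:R) / qC k q C.

Definition cpoint (C : {set T}) : R * R :=
  (\sum_c cweight C c * rho c, \sum_c cweight C c * xi c).

Lemma mass_delta (C : {set T}) (f : T -> R) :
  \sum_c mass C (fun x => (x == c)%:R) * f c = mass C f.
Proof.
rewrite /mass.
transitivity (\sum_c \sum_th \sum_sg (firstk k th == C)%:R * q th * phi (relabel th) sg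
    * (th (pi (response sg)) == c)%:R * f c).
  by apply: eq_bigr => c _; rewrite mulr_suml; apply: eq_bigr => th _; rewrite mulr_suml.
rewrite exchange_big; apply: eq_bigr => th _; rewrite exchange_big; apply: eq_bigr => sg _.
rewrite (bigD1 (th (pi (response sg)))) //= eqxx mulr1 big1 ?addr0 // => c.
by rewrite eq_sym => /negbTE ->; rewrite mulr0 mul0r.
Qed.

Lemma qC_ge0 (C : {set T}) : 0 <= qC k q C.
Proof. by apply: sumr_ge0 => th _; apply: mulr_ge0. Qed.

Lemma mass_one (C : {set T}) : mass C (fun=> 1) = qC k q C.
Proof.
rewrite /mass /qC; apply: eq_bigr => th _.
transitivity ((firstk k th == C)%:R * q th * \sum_sg phi (relabel th) sg).
  by rewrite mulr_sumr; apply: eq_bigr => sg _; rewrite mulr1.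
by rewrite phi_sum1 mulr1 mulrC.
Qed.

Lemma qC_cpoint (C : {set T}) (f : T -> R) :
  qC k q C * (\sum_c cweight C c * f c) = mass C f.
Proof.
have [q0 | q_neq0] := eqVneq (qC k q C) 0; last first.
  rewrite mulr_sumr -mass_delta; apply: eq_bigr => c _.
  by rewrite /cweight mulrA [qC k q C * _]mulrC divfK.
have qfirst_ge0 th : true -> 0 <= q th * (firstk k th == C)%:R by move=> _; apply: mulr_ge0.
rewrite q0 mul0r; symmetry; apply: big1 => th _; apply: big1 => sg _.
by rewrite (mulrC _ (q th)) (psumr_eq0P qfirst_ge0 q0) // !mul0r.
Qed.

(* The action taken in a state with first types C has a type in C, so
   cpoint C lies in conv(C). *)
Lemma cpoint_inconv (C : {set T}) : 0 < qC k q C -> inconv rho xi C (cpoint C).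
Proof.
move=> q_gt0; exists (cweight C); split => //.
- move=> c; apply: divr_ge0; last exact: ltW.
  by apply: sumr_ge0 => th _; apply: sumr_ge0 => sg _; rewrite !mulr_ge0.
- move=> c cNC; rewrite /cweight /mass; apply/eqP; rewrite mulf_eq0; apply/orP; left.
  apply/eqP/big1 => th _; apply: big1 => sg _.
  have [e | ne] := eqVneq (firstk k th) C; last by rewrite !mul0r.
  have : th (pi (response sg)) \in C by rewrite -e; apply: imset_f; rewrite inE.
  move=> inC; have /negbTE -> : th (pi (response sg)) != c by apply: contraNneq cNC => <-.
  by rewrite mulr0.
- apply: (mulfI (lt0r_neq0 q_gt0)); rewrite mulr1 -[RHS]mass_one -qC_cpoint.
  by congr (_ * _); apply: eq_bigr => c _; rewrite mulr1.
Qed.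

Lemma sum_qC_cpoint (f : T -> R) :
  \sum_(C : {set T} | #|C| == k) qC k q C * (\sum_c cweight C c * f c) = chosen_value f.
Proof.
under eq_bigr do rewrite qC_cpoint.
rewrite chosen_value_relabel /mass [LHS]exchange_big; apply: eq_bigr => th _.
rewrite exchange_big; apply: eq_bigr => sg _.
have [q0 | q_gt0] := eqVneq (q th) 0.
  by rewrite q0 !mul0r; apply: big1 => C _; rewrite mulr0 !mul0r.
have first_card : #|firstk k th| == k.
  by rewrite card_firstk //; apply: q_inj; rewrite lt_neqAle eq_sym q_gt0 q_ge0.
rewrite (bigD1 (firstk k th)) //= eqxx mul1r big1 ?addr0 // => C /andP [_ ne].
by rewrite eq_sym (negbTE ne) !mul0r.
Qed.

End Symmetrization.

Unset Implicit Arguments. Set Strict Implicit.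

Theorem lemma3p2 (R : realType) (T : finType) (n k : nat)
  (rho xi : T -> R) (q : state n T -> R) :
  (2 <= k)%N -> (k <= n)%N ->
  is_prior q -> symmetric_instance q ->
  forall (phi : state n T -> 'I_k -> R) (rec : 'I_k -> 'I_n),
    is_scheme phi ->
    (forall sg, (rec sg < k)%N) ->
    persuasive rho q phi rec ->
    exists (s : option R) (P : {set T} -> R * R),
      [/\ (forall s0, s = Some s0 -> s0 <= 0),
          s_pareto k rho xi q s P &
          uS_scheme rho xi q phi <= uS_pc k q P].
Proof.
move=> k_ge2 k_le_n [q_ge0 q_sum1] [q_sym q_inj] phi _ [phi_ge0 phi_sum1] _ _.
have k_gt0 : (0 < k)%N by apply: leq_trans k_ge2.
have n_gt0 : (0 < n)%N by apply: leq_trans k_le_n.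
have [c0 _] : exists c : T, true.
  case: (pickP (fun _ : state n T => true)) => [th _ | no_state].
    by exists (th (Ordinal n_gt0)).
  by move: q_sum1; rewrite big_pred0 // => /eqP; rewrite eq_sym oner_eq0.
pose response := response rho xi q n_gt0 phi.
have [pi pi_into_k] : exists pi : 'S_n, forall a, a \in [set response sg | sg in 'I_k] ->
    (pi a < k)%N.
  by apply: perm_into_prefix; apply: leq_trans (leq_imset_card _ _) _; rewrite card_ord.
have {}pi_into_k sg : (pi (response sg) < k)%N by apply: pi_into_k; apply: imset_f.
pose Q := cpoint rho xi q n_gt0 phi pi.
have Q_in (C : {set T}) : #|C| = k -> 0 < qC k q C -> inconv rho xi C (Q C).
  by move=> _; apply: cpoint_inconv.
have [l [P [l_ge0 P_corr uR_le uS_le]]] := pareto_improvement c0 (qC_ge0 k q_ge0) k_gt0 Q_in.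
exists (Some (- l)), P; split.
- by move=> s0 [<-]; rewrite oppr_le0.
- split; first by move=> C cardC _; case: (P_corr C cardC).
  split; first by move=> C cardC _; apply: P_corr.
  apply: le_trans uR_le; rewrite /wsum sum_qC_cpoint //.
  exact: rhoE_le_chosen_value.
- apply: le_trans uS_le; rewrite /wsum sum_qC_cpoint //.
  by rewrite uS_chosen_value.
Qed.
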